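(* Let $\gamma>0$, let $\beta_1=\beta_1(\gamma)$ be the unique positive solution of $\frac{\sqrt\pi}{2}\gamma x(1+x)^{1/2}(3+x)=1$, let $0\le\beta<\beta_1$ and let $\mathrm{Ste}_\infty>0$. For each $\lambda>0$ let $\varphi_\lambda$ be the unique solution, within the set of bounded analytic functions $h:[0,\lambda]\to\mathbb{R}$ with $0\le h\le 1$, of \begin{align*} &[(1+\beta y(\eta))y'(\eta)]'+2\eta y'(\eta)=0, \quad 0<\eta<\lambda,\\ &y'(0)+\beta y(0)y'(0)-\gamma y(0)=0,\\ &y(\lambda)=1. \end{align*} Then the equation $$\frac{\varphi_\lambda'(\lambda)}{\lambda}=\frac{2}{(1+\beta)\,\mathrm{Ste}_\infty}$$ has at least one solution $\lambda>0$.
   Context: In the physical problem, $\mathrm{Ste}_\infty=c(T_f-T_\infty)/l$ is the Stefan number and $\gamma=2h_0\sqrt{\alpha_0}/k_0$. *)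

From Stdlib Require Import Reals.
From Coquelicot Require Import Coquelicot.
Open Scope R_scope.

Definition deriv_on_closed (f df : R -> R) (a b : R) : Prop :=
  forall x, a <= x <= b ->
    filterlim (fun t => (f t - f x) / (t - x))
      (within (fun t => a <= t <= b /\ t <> x) (locally x))
      (locally (df x)).

Definition analytic_on_closed (h : R -> R) (a b : R) : Prop :=
  forall x, a <= x <= b ->
    exists r : R, 0 < r /\ exists c : nat -> R,
      forall t, a <= t <= b -> Rabs (t - x) < r ->
        is_series (fun n => c n * (t - x) ^ n) (h t).

Definition is_sol (beta gamma lam : R) (y : R -> R) : Prop :=
  analytic_on_closed y 0 lam /\
  (exists M, forall eta, 0 <= eta <= lam -> Rabs (y eta) <= M) /\
  (forall eta, 0 <= eta <= lam -> 0 <= y eta <= 1) /\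
  exists dy : R -> R,
    deriv_on_closed y dy 0 lam /\
    (forall eta, 0 < eta < lam ->
       is_derive (fun s => (1 + beta * y s) * dy s) eta (- (2 * eta * dy eta))) /\
    dy 0 + beta * y 0 * dy 0 - gamma * y 0 = 0 /\
    y lam = 1.

From Stdlib Require Import Reals Lra Psatz Classical.
From Coquelicot Require Import Coquelicot.
Open Scope R_scope.

(* Extend the solution y for lam constantly outside [0, lam], and put
   E(s) = exp (- \int_0^s 2t / (1 + beta y(t)) dt) and P = gamma y(0) E.  The equation
   integrates to (1 + beta y) y' = P, so h(lam) := P(lam) = (1 + beta) phi_lam'(lam) and we
   must solve h(lam) = (2 / Ste) lam.  As 0 <= h <= gamma while
   h(lam) >= gamma (1 - gamma lam) (1 - lam^2), the intermediate value theorem applies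
   once h is continuous on (0, oo).
   For lam1 < lam2 a comparison principle (continuous induction when y1(0) <> y2(0), a
   Gronwall energy estimate when y1(0) = y2(0)) gives y2 <= y1 on [0, lam1], hence
   P2 <= P1 there.  Integrating U' = P for the Kirchhoff transform U = y + beta y^2 / 2
   over [lam1 - t, lam1] then yields
   0 <= h(lam1) - h(lam2) <= C ((lam2 - lam1) / t + t + (lam2 - lam1)). *)

Lemma MVT_derivable_pt_lim (f df : R -> R) a b : a < b ->
  (forall c, a < c < b -> derivable_pt_lim f c (df c)) ->
  (forall c, a <= c <= b -> continuity_pt f c) ->
  exists c, a < c < b /\ f b - f a = df c * (b - a).
Proof.
  intros Hab Hd Hc.
  set (pr1 := fun c (H : a < c < b) =>
    exist (fun l => derivable_pt_lim f c l) (df c) (Hd c H)).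
  assert (pr2 : forall c, a < c < b -> derivable_pt id c)
    by (intros c _; exact (derivable_pt_id c)).
  destruct (MVT f id a b pr1 pr2 Hab Hc) as [c [Hcab Heq]].
  { intros c _. apply derivable_continuous_pt, derivable_pt_id. }
  exists c; split; [exact Hcab|].
  rewrite (derive_pt_eq_0 _ _ _ (pr1 c Hcab) (Hd c Hcab)) in Heq.
  rewrite (derive_pt_eq_0 _ _ _ (pr2 c Hcab) (derivable_pt_lim_id c)) in Heq.
  unfold id in Heq. lra.
Qed.

Lemma continuity_pt_eps_iff (f : R -> R) x :
  continuity_pt f x <->
  forall eps, 0 < eps -> exists del, 0 < del /\
    forall z, Rabs (z - x) < del -> Rabs (f z - f x) < eps.
Proof.
  split; intros H eps Heps; destruct (H eps Heps) as [del [Hdel Hz]];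
    exists del; split; try lra.
  - intros z Hzx. destruct (Req_dec z x) as [->|Hne].
    + unfold Rminus; rewrite Rplus_opp_r, Rabs_R0; lra.
    + apply Hz. split; [split; [exact I|auto]|exact Hzx].
  - intros z [_ Hzx]. apply Hz, Hzx.
Qed.

Lemma continuity_pt_lt_right (f g : R -> R) x :
  continuity_pt f x -> continuity_pt g x -> f x < g x ->
  exists d, 0 < d /\ forall s, x <= s < x + d -> f s < g s.
Proof.
  intros Hf Hg Hlt.
  set (e := (g x - f x) / 2).
  assert (He : 0 < e) by (unfold e; lra).
  destruct (proj1 (continuity_pt_eps_iff f x) Hf e He) as [d1 [Hd1 H1]].
  destruct (proj1 (continuity_pt_eps_iff g x) Hg e He) as [d2 [Hd2 H2]].
  exists (Rmin d1 d2). split; [apply Rmin_pos; auto|].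
  intros s Hs. pose proof (Rmin_l d1 d2). pose proof (Rmin_r d1 d2).
  assert (Hsx : Rabs (s - x) = s - x) by (apply Rabs_pos_eq; lra).
  specialize (H1 s ltac:(lra)). specialize (H2 s ltac:(lra)).
  apply Rabs_def2 in H1. apply Rabs_def2 in H2. unfold e in *. lra.
Qed.

Lemma deriv_on_closed_eps f df a b x : deriv_on_closed f df a b -> a <= x <= b ->
  forall eps, 0 < eps -> exists del, 0 < del /\
    forall t, a <= t <= b -> t <> x -> Rabs (t - x) < del ->
      Rabs ((f t - f x) / (t - x) - df x) < eps.
Proof.
  intros H Hx eps Heps.
  specialize (H x Hx). rewrite filterlim_locally in H.
  destruct (H (mkposreal eps Heps)) as [d Hd].
  exists d; split; [apply cond_pos|]. intros t Ht Hne Htx.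
  apply (Hd t); [exact Htx|split; auto].
Qed.

Lemma derivable_pt_lim_0_const f a b :
  (forall c, a < c < b -> derivable_pt_lim f c 0) ->
  forall x1 x2, a < x1 < b -> a < x2 < b -> f x1 = f x2.
Proof.
  intros H.
  assert (Hlt : forall x1 x2, a < x1 < b -> a < x2 < b -> x1 < x2 -> f x1 = f x2).
  { intros x1 x2 H1 H2 H12.
    destruct (MVT_derivable_pt_lim f (fun _ => 0) x1 x2 H12) as [c [_ Heq]].
    - intros c Hc. apply H. lra.
    - intros c Hc. apply derivable_continuous_pt. exists 0. apply H. lra.
    - lra. }
  intros x1 x2 H1 H2. destruct (Rtotal_order x1 x2) as [h|[->|h]]; auto.
  symmetry; auto.
Qed.

Lemma real_induction (P : R -> Prop) m : 0 <= m ->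
  (forall x, 0 <= x <= m -> (forall s, 0 <= s < x -> P s) -> P x) ->
  (forall x, 0 <= x < m -> P x -> exists d, 0 < d /\ forall s, x <= s < x + d -> P s) ->
  forall x, 0 <= x <= m -> P x.
Proof.
  intros Hm Hclosed Hopen.
  set (S := fun t => 0 <= t <= m /\ forall s, 0 <= s <= t -> P s).
  assert (HS0 : S 0).
  { split; [lra|]. intros s Hs. replace s with 0 by lra.
    apply Hclosed; [lra|]. intros; lra. }
  destruct (completeness S) as [T [HT1 HT2]].
  { exists m. intros t [Ht _]. lra. }
  { exists 0; auto. }
  assert (HT0 : 0 <= T) by (apply HT1; auto).
  assert (HTm : T <= m) by (apply HT2; intros t [Ht _]; lra).
  assert (Hbelow : forall s, 0 <= s < T -> P s).
  { intros s Hs. destruct (classic (exists t, S t /\ s <= t)) as [[t [[_ Ht] Hst]]|Hn].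
    - apply Ht; lra.
    - exfalso. assert (Hub : is_upper_bound S s).
      { intros t Ht. destruct (Rle_dec t s); auto.
        exfalso; apply Hn. exists t; split; auto; lra. }
      specialize (HT2 s Hub). lra. }
  assert (HST : S T).
  { split; [lra|]. intros s Hs. destruct (Req_dec s T) as [->|Hne].
    - apply Hclosed; [lra|auto].
    - apply Hbelow; lra. }
  destruct (Req_dec T m) as [<-|HneT].
  - intros x Hx. apply HST; lra.
  - exfalso. destruct (Hopen T ltac:(lra) (proj2 HST T ltac:(lra))) as [d [Hd Hs]].
    set (T' := Rmin (T + d / 2) m).
    assert (HT' : T < T' <= m).
    { unfold T', Rmin. destruct Rle_dec; lra. }
    assert (HST' : S T').
    { split; [lra|]. intros s Hs'. destruct (Rle_dec s T).
      - apply HST; lra.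
      - apply Hs. pose proof (Rmin_l (T + d / 2) m). fold T' in H. lra. }
    specialize (HT1 _ HST'). lra.
Qed.

Lemma derivable_pt_lim_sum_sq f g x df dg :
  derivable_pt_lim f x df -> derivable_pt_lim g x dg ->
  derivable_pt_lim (fun s => f s * f s + g s * g s) x (2 * f x * df + 2 * g x * dg).
Proof.
  intros Hf Hg.
  replace (2 * f x * df + 2 * g x * dg) with (df * f x + f x * df + (dg * g x + g x * dg)) by ring.
  apply (derivable_pt_lim_plus (fun s => f s * f s) (fun s => g s * g s));
    [apply (derivable_pt_lim_mult f f)|apply (derivable_pt_lim_mult g g)]; auto.
Qed.

Lemma gronwall_nonpos f df C m :
  (forall x, 0 < x < m -> derivable_pt_lim f x (df x)) ->
  (forall x, 0 <= x <= m -> continuity_pt f x) ->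
  (forall x, 0 < x < m -> df x <= C * f x) -> f 0 = 0 ->
  forall x, 0 <= x <= m -> f x <= 0.
Proof.
  intros Hd Hc Hdf Hf0 x Hx.
  destruct (Req_dec x 0) as [->|Hx0]; [lra|].
  set (w := fun s => exp (- C * s)).
  assert (Hw : forall s, derivable_pt_lim w s (- C * w s)).
  { intros s. unfold w. replace (- C * exp (- C * s)) with (exp (- C * s) * (- C * 1)) by ring.
    apply (derivable_pt_lim_comp (fun s => - C * s) exp); [|apply derivable_pt_lim_exp].
    apply derivable_pt_lim_scal, derivable_pt_lim_id. }
  destruct (MVT_derivable_pt_lim (fun s => f s * w s) (fun s => (df s - C * f s) * w s) 0 x
    ltac:(lra)) as [c [Hcx Heq]].
  - intros c Hcx. replace ((df c - C * f c) * w c) with (df c * w c + f c * (- C * w c)) by ring.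
    apply (derivable_pt_lim_mult f w); [apply Hd; lra|apply Hw].
  - intros c Hcx. apply (continuity_pt_mult f w); [apply Hc; lra|].
    apply derivable_continuous_pt. eexists. apply Hw.
  - assert (Hwc : 0 < w c) by apply exp_pos.
    assert (Hwx : 0 < w x) by apply exp_pos.
    specialize (Hdf c ltac:(lra)). rewrite Hf0, Rmult_0_l, Rminus_0_r in Heq.
    assert (Hwcx : 0 < w c * x) by (apply Rmult_lt_0_compat; lra).
    assert (Hfw : f x * w x <= 0) by nra.
    nra.
Qed.

Lemma continuity_pt_of_modulus (h : R -> R) x A B : 0 < x -> 0 < A -> 0 < B ->
  (forall l1 l2 t, x / 2 <= l1 -> l1 < l2 -> l2 <= 2 * x -> 0 < t <= l1 ->
     Rabs (h l1 - h l2) <= A * (l2 - l1) / t + B * t + B * (l2 - l1)) ->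
  continuity_pt h x.
Proof.
  intros Hx HA HB Hmod. apply continuity_pt_eps_iff. intros eps Heps.
  set (t := Rmin (x / 2) (eps / (3 * B))).
  assert (Ht : 0 < t) by (apply Rmin_pos; [lra|apply Rdiv_lt_0_compat; lra]).
  assert (Htx : t <= x / 2) by apply Rmin_l.
  assert (HBt : B * t <= eps / 3).
  { pose proof (Rmin_r (x / 2) (eps / (3 * B))) as H. fold t in H.
    apply Rle_trans with (B * (eps / (3 * B))); [apply Rmult_le_compat_l; lra|].
    right; field; lra. }
  set (d := Rmin (x / 2) (Rmin (eps * t / (3 * A)) (eps / (3 * B)))).
  assert (Hd : 0 < d).
  { apply Rmin_pos; [lra|]. apply Rmin_pos; apply Rdiv_lt_0_compat;
      try apply Rmult_lt_0_compat; lra. }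
  exists d. split; [exact Hd|]. intros z Hz.
  pose proof (Rmin_l (x / 2) (Rmin (eps * t / (3 * A)) (eps / (3 * B)))).
  pose proof (Rmin_r (x / 2) (Rmin (eps * t / (3 * A)) (eps / (3 * B)))).
  pose proof (Rmin_l (eps * t / (3 * A)) (eps / (3 * B))).
  pose proof (Rmin_r (eps * t / (3 * A)) (eps / (3 * B))). fold d in H, H0.
  assert (Hsmall : forall e, 0 <= e < d -> A * e / t + B * t + B * e < eps).
  { intros e He.
    assert (A * e / t < eps / 3).
    { apply Rmult_lt_reg_r with t; [exact Ht|].
      replace (A * e / t * t) with (A * e) by (field; lra).
      apply Rlt_le_trans with (A * (eps * t / (3 * A))); [apply Rmult_lt_compat_l; lra|].
      right; field; lra. }
    assert (B * e < eps / 3).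
    { apply Rlt_le_trans with (B * (eps / (3 * B))); [apply Rmult_lt_compat_l; lra|].
      right; field; lra. }
    lra. }
  destruct (Rtotal_order z x) as [hz|[->|hz]].
  - rewrite Rabs_left in Hz by lra.
    specialize (Hmod z x t ltac:(lra) hz ltac:(lra) ltac:(lra)).
    specialize (Hsmall (x - z) ltac:(lra)). lra.
  - unfold Rminus. rewrite Rplus_opp_r, Rabs_R0. lra.
  - rewrite Rabs_pos_eq in Hz by lra.
    specialize (Hmod x z t ltac:(lra) hz ltac:(lra) ltac:(lra)).
    specialize (Hsmall (z - x) ltac:(lra)). rewrite Rabs_minus_sym. lra.
Qed.

Lemma exists_eq_linear (h : R -> R) M k a : 0 < k -> 0 < a -> k * a < h a ->
  (forall x, 0 < x -> continuity_pt h x) -> (forall x, 0 < x -> h x <= M) ->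
  exists lam, 0 < lam /\ h lam = k * lam.
Proof.
  intros Hk Ha Hha Hc HM.
  set (b := a + (Rabs M + 1) / k).
  assert (Hb : a < b).
  { pose proof (Rabs_pos M). assert (0 < (Rabs M + 1) / k) by (apply Rdiv_lt_0_compat; lra).
    unfold b; lra. }
  assert (Hkb : k * b = k * a + (Rabs M + 1)) by (unfold b; field; lra).
  destruct (Ranalysis5.IVT_interv (fun x => k * x - h x) a b) as [z [Hz Hfz]].
  - intros x Hx. apply (continuity_pt_minus (fun x => k * x)); [|apply Hc; lra].
    apply continuity_pt_scal, derivable_continuous_pt, derivable_pt_id.
  - exact Hb.
  - lra.
  - pose proof (HM b ltac:(lra)). pose proof (Rle_abs M). nra.
  - exists z. split; lra.
Qed.

Definition clamp (l s : R) := Rmax 0 (Rmin l s).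

Definition extend (l : R) (y : R -> R) (s : R) := y (clamp l s).

Lemma clamp_range l s : 0 <= l -> 0 <= clamp l s <= l.
Proof. intros. unfold clamp, Rmax, Rmin. repeat destruct Rle_dec; lra. Qed.

Lemma clamp_id l s : 0 <= s <= l -> clamp l s = s.
Proof. intros. unfold clamp, Rmax, Rmin. repeat destruct Rle_dec; lra. Qed.

Lemma clamp_lipschitz l s t : 0 <= l -> Rabs (clamp l s - clamp l t) <= Rabs (s - t).
Proof.
  intros. unfold clamp, Rmax, Rmin. repeat destruct Rle_dec;
    repeat (unfold Rabs; destruct Rcase_abs); lra.
Qed.

Lemma extend_id l y s : 0 <= s <= l -> extend l y s = y s.
Proof. intros. unfold extend. rewrite clamp_id; auto. Qed.

Lemma Rabs_le_of_quotient (u v d : R) : v <> 0 -> Rabs (u / v - d) < 1 ->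
  Rabs u <= (Rabs d + 1) * Rabs v.
Proof.
  intros Hv H.
  replace u with (u / v * v) by (field; auto).
  rewrite Rabs_mult. apply Rmult_le_compat_r; [apply Rabs_pos|].
  pose proof (Rabs_triang_inv (u / v) d). lra.
Qed.

Section ClampedExtension.

Variables (y dy : R -> R) (l : R).
Hypothesis Hl : 0 < l.
Hypothesis Hdy : deriv_on_closed y dy 0 l.

Lemma extend_continuous s : continuity_pt (extend l y) s.
Proof.
  apply continuity_pt_eps_iff. intros eps Heps.
  set (x := clamp l s).
  assert (Hx : 0 <= x <= l) by (apply clamp_range; lra).
  destruct (deriv_on_closed_eps _ _ _ _ _ Hdy Hx 1 Rlt_0_1) as [del [Hdel Hq]].
  set (M := Rabs (dy x) + 1).
  assert (HM : 0 < M) by (pose proof (Rabs_pos (dy x)); unfold M; lra).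
  exists (Rmin del (eps / M)). split.
  { apply Rmin_pos; auto. apply Rdiv_lt_0_compat; auto. }
  intros z Hz. unfold extend. fold x.
  pose proof (clamp_lipschitz l z s ltac:(lra)) as Hlip. fold x in Hlip.
  set (t := clamp l z) in *.
  destruct (Req_dec t x) as [->|Hne].
  { unfold Rminus; rewrite Rplus_opp_r, Rabs_R0; lra. }
  assert (Ht : 0 <= t <= l) by (apply clamp_range; lra).
  pose proof (Rmin_l del (eps / M)). pose proof (Rmin_r del (eps / M)).
  specialize (Hq t Ht Hne ltac:(lra)).
  apply Rabs_le_of_quotient in Hq; [|lra]. fold M in Hq.
  apply Rle_lt_trans with (M * Rabs (t - x)); [exact Hq|].
  apply Rlt_le_trans with (M * (eps / M)).
  - apply Rmult_lt_compat_l; lra.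
  - right; field; lra.
Qed.

Lemma extend_derivable eta : 0 < eta < l -> derivable_pt_lim (extend l y) eta (dy eta).
Proof.
  intros He eps Heps.
  destruct (deriv_on_closed_eps _ _ _ _ eta Hdy ltac:(lra) eps Heps) as [del [Hdel Hq]].
  assert (Hp : 0 < Rmin del (Rmin eta (l - eta))).
  { apply Rmin_pos; auto. apply Rmin_pos; lra. }
  exists (mkposreal _ Hp). simpl. intros h Hh Hlt.
  pose proof (Rmin_l del (Rmin eta (l - eta))).
  pose proof (Rmin_r del (Rmin eta (l - eta))).
  pose proof (Rmin_l eta (l - eta)). pose proof (Rmin_r eta (l - eta)).
  pose proof (Rle_abs h). pose proof (Rle_abs (- h)). rewrite Rabs_Ropp in *.
  rewrite !extend_id by lra.
  specialize (Hq (eta + h) ltac:(lra) ltac:(lra)).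
  replace (eta + h - eta) with h in Hq by ring. apply Hq. lra.
Qed.

Lemma extend_quotient_endpoint (F : R -> R) x m : x = 0 \/ x = l -> 0 < m < l ->
  (forall eta, 0 < eta < l -> derivable_pt_lim (extend l y) eta (F eta)) ->
  exists c t, Rabs (c - x) < m /\ 0 <= t <= l /\ t <> x /\ Rabs (t - x) = m /\
              (y t - y x) / (t - x) = F c.
Proof.
  intros Hx Hm HY.
  destruct Hx as [-> | ->].
  - destruct (MVT_derivable_pt_lim (extend l y) F 0 m ltac:(lra)) as [c [Hc Heq]].
    { intros c Hc. apply HY. lra. }
    { intros c _. apply extend_continuous. }
    rewrite !extend_id in Heq by lra.
    exists c, m. rewrite !Rminus_0_r, !Rabs_pos_eq by lra.
    repeat split; try lra. rewrite Heq. field. lra.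
  - destruct (MVT_derivable_pt_lim (extend l y) F (l - m) l ltac:(lra)) as [c [Hc Heq]].
    { intros c Hc. apply HY. lra. }
    { intros c _. apply extend_continuous. }
    rewrite !extend_id in Heq by lra.
    exists c, (l - m). rewrite !Rabs_left by lra.
    repeat split; try lra.
    apply Rmult_eq_reg_r with (l - m - l); [|lra].
    field_simplify; lra.
Qed.

Lemma deriv_on_closed_endpoint (F : R -> R) x : x = 0 \/ x = l ->
  continuity_pt F x ->
  (forall eta, 0 < eta < l -> derivable_pt_lim (extend l y) eta (F eta)) ->
  dy x = F x.
Proof.
  intros Hx HF HY.
  apply Rminus_diag_uniq.
  assert (Hx' : 0 <= x <= l) by (destruct Hx; subst; lra).
  enough (Hsmall : forall eps, 0 < eps -> Rabs (dy x - F x) <= 0 + 2 * eps).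
  { assert (Habs : Rabs (dy x - F x) <= 0).
    { apply Rle_plus_epsilon. intros eps Heps.
      replace eps with (2 * (eps / 2)) by field. apply Hsmall. lra. }
    pose proof (Rabs_pos (dy x - F x)).
    apply Rabs_eq_0. lra. }
  intros eps Heps.
  destruct (deriv_on_closed_eps _ _ _ _ _ Hdy Hx' eps Heps) as [d1 [Hd1 H1]].
  destruct (proj1 (continuity_pt_eps_iff F x) HF eps Heps) as [d2 [Hd2 H2]].
  set (m := Rmin d1 (Rmin d2 l) / 2).
  pose proof (Rmin_l d1 (Rmin d2 l)). pose proof (Rmin_r d1 (Rmin d2 l)).
  pose proof (Rmin_l d2 l). pose proof (Rmin_r d2 l).
  assert (Hm : 0 < Rmin d1 (Rmin d2 l)) by (apply Rmin_pos; auto; apply Rmin_pos; auto).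
  destruct (extend_quotient_endpoint F x m Hx ltac:(unfold m; lra) HY)
    as [c [t [Hc [Ht [Htx [Htd Hq]]]]]].
  specialize (H1 t Ht Htx ltac:(unfold m in Htd; lra)). rewrite Hq in H1.
  specialize (H2 c ltac:(unfold m in Hc; lra)).
  pose proof (Rabs_triang (dy x - F c) (F c - F x)) as HT.
  replace (dy x - F c + (F c - F x)) with (dy x - F x) in HT by ring.
  rewrite Rabs_minus_sym in H1. lra.
Qed.

End ClampedExtension.

Lemma exp_le_compat x y : x <= y -> exp x <= exp y.
Proof. intros [H| ->]; [left; apply exp_increasing, H|lra]. Qed.

Definition kern (beta : R) (Y : R -> R) (s : R) := 2 * s / (1 + beta * Y s).

Definition kern_int (beta : R) (Y : R -> R) (t : R) := RInt (kern beta Y) 0 t.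

Definition decay (beta : R) (Y : R -> R) (t : R) := exp (- kern_int beta Y t).

Section IntegratingFactor.

Variables (beta : R) (Y : R -> R).
Hypothesis Hbeta : 0 <= beta.
Hypothesis HYc : forall z, continuity_pt Y z.
Hypothesis HYr : forall z, 0 <= Y z <= 1.

Lemma kern_continuous s : continuity_pt (kern beta Y) s.
Proof.
  unfold kern.
  apply (continuity_pt_div (fun s => 2 * s) (fun s => 1 + beta * Y s)).
  - apply (continuity_pt_scal id), derivable_continuous_pt, derivable_pt_id.
  - apply (continuity_pt_plus (fun _ => 1) (fun s => beta * Y s));
      [apply continuity_pt_const; intros a b; auto|].
    apply (continuity_pt_scal Y), HYc.
  - specialize (HYr s). nra.
Qed.

Lemma kern_bounds s : 0 <= s -> 0 <= kern beta Y s <= 2 * s.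
Proof.
  intros Hs. unfold kern. specialize (HYr s).
  assert (H1 : 1 <= 1 + beta * Y s) by nra.
  split.
  - apply Rdiv_le_0_compat; lra.
  - apply Rle_trans with (2 * s / 1); [|right; field].
    apply Rmult_le_compat_l; [lra|]. apply Rinv_le_contravar; lra.
Qed.

Lemma kern_int_derivable x : derivable_pt_lim (kern_int beta Y) x (kern beta Y x).
Proof.
  apply is_derive_Reals.
  apply (is_derive_RInt (kern beta Y) (kern_int beta Y) 0 x).
  - exists (mkposreal 1 Rlt_0_1). intros b _. apply (RInt_correct (V := R_CompleteNormedModule)).
    apply ex_RInt_continuous. intros z _. apply continuity_pt_filterlim, kern_continuous.
  - apply continuity_pt_filterlim, kern_continuous.
Qed.

Lemma kern_int_0 : kern_int beta Y 0 = 0.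
Proof. unfold kern_int. rewrite RInt_point. reflexivity. Qed.

Lemma decay_derivable x : derivable_pt_lim (decay beta Y) x (- kern beta Y x * decay beta Y x).
Proof.
  unfold decay.
  replace (- kern beta Y x * exp (- kern_int beta Y x))
    with (exp (- kern_int beta Y x) * (- kern beta Y x)) by ring.
  apply (derivable_pt_lim_comp (fun t => - kern_int beta Y t) exp).
  - apply (derivable_pt_lim_opp (kern_int beta Y)), kern_int_derivable.
  - apply derivable_pt_lim_exp.
Qed.

Lemma decay_continuous x : continuity_pt (decay beta Y) x.
Proof. apply derivable_continuous_pt. eexists. apply decay_derivable. Qed.

Lemma decay_0 : decay beta Y 0 = 1.
Proof. unfold decay. rewrite kern_int_0, Ropp_0, exp_0. reflexivity. Qed.

Lemma kern_int_bounds x : 0 <= x -> 0 <= kern_int beta Y x <= x * x.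
Proof.
  intros [Hx| <-]; [|rewrite kern_int_0; lra].
  destruct (MVT_derivable_pt_lim (fun s => s * s - kern_int beta Y s)
              (fun s => 2 * s - kern beta Y s) 0 x Hx) as [c [Hcx Hsq]].
  - intros c _. apply (derivable_pt_lim_minus (fun s => s * s)); [|apply kern_int_derivable].
    replace (2 * c) with (1 * id c + id c * 1) by (unfold id; ring).
    apply (derivable_pt_lim_mult id id); apply derivable_pt_lim_id.
  - intros c _. apply (continuity_pt_minus (fun s => s * s)).
    + apply (continuity_pt_mult id id); apply derivable_continuous_pt, derivable_pt_id.
    + apply derivable_continuous_pt. eexists. apply kern_int_derivable.
  - destruct (MVT_derivable_pt_lim (kern_int beta Y) (kern beta Y) 0 x Hx) as [c' [Hc'x Hint]].
    + intros; apply kern_int_derivable.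
    + intros; apply derivable_continuous_pt; eexists; apply kern_int_derivable.
    + rewrite kern_int_0 in Hsq, Hint.
      pose proof (kern_bounds c ltac:(lra)). pose proof (kern_bounds c' ltac:(lra)).
      split; nra.
Qed.

Lemma decay_bounds x : 0 <= x -> 0 < decay beta Y x <= 1 /\ 1 - x * x <= decay beta Y x.
Proof.
  intros Hx. unfold decay.
  pose proof (kern_int_bounds x Hx).
  split; [split|].
  - apply exp_pos.
  - rewrite <- exp_0. apply exp_le_compat. lra.
  - pose proof (exp_ineq1_le (- kern_int beta Y x)). lra.
Qed.

End IntegratingFactor.

Lemma decay_le_of_le beta Y1 Y2 s : 0 <= beta ->
  (forall z, continuity_pt Y1 z) -> (forall z, 0 <= Y1 z <= 1) ->
  (forall z, continuity_pt Y2 z) -> (forall z, 0 <= Y2 z <= 1) -> 0 <= s ->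
  (forall z, 0 < z < s -> Y2 z <= Y1 z) -> decay beta Y2 s <= decay beta Y1 s.
Proof.
  intros Hb Hc1 Hr1 Hc2 Hr2 Hs Hle. unfold decay. apply exp_le_compat.
  destruct Hs as [Hs| <-]; [|rewrite !kern_int_0; lra].
  destruct (MVT_derivable_pt_lim (fun t => kern_int beta Y2 t - kern_int beta Y1 t)
              (fun t => kern beta Y2 t - kern beta Y1 t) 0 s Hs) as [c [Hc Heq]].
  - intros c _. apply derivable_pt_lim_minus; apply kern_int_derivable; auto.
  - intros c _. apply derivable_continuous_pt. eexists.
    apply derivable_pt_lim_minus; apply kern_int_derivable; auto.
  - rewrite !kern_int_0 in Heq.
    assert (kern beta Y1 c <= kern beta Y2 c).
    { unfold kern. specialize (Hle c Hc). specialize (Hr1 c). specialize (Hr2 c).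
      apply Rmult_le_compat_l; [lra|]. apply Rinv_le_contravar; nra. }
    nra.
Qed.

Record solves (beta gamma l : R) (y dy : R -> R) : Prop := {
  sol_range : forall eta, 0 <= eta <= l -> 0 <= y eta <= 1;
  sol_deriv : deriv_on_closed y dy 0 l;
  sol_ode : forall eta, 0 < eta < l ->
    is_derive (fun s => (1 + beta * y s) * dy s) eta (- (2 * eta * dy eta));
  sol_robin : dy 0 + beta * y 0 * dy 0 - gamma * y 0 = 0;
  sol_end : y l = 1 }.

Arguments sol_range {beta gamma l y dy}.
Arguments sol_deriv {beta gamma l y dy}.
Arguments sol_ode {beta gamma l y dy}.
Arguments sol_robin {beta gamma l y dy}.
Arguments sol_end {beta gamma l y dy}.

Lemma is_sol_solves beta gamma l y : is_sol beta gamma l y -> exists dy, solves beta gamma l y dy.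
Proof.
  intros [_ [_ [Hr [dy [Hd [Ho [Hbc He]]]]]]]. exists dy. split; assumption.
Qed.

(* By [solves_deriv_eq] this is the flux (1 + beta y) y': the ODE reads P' = - kern P,
   and the Robin condition gives P 0 = gamma y 0. *)
Definition flux (beta gamma l : R) (y : R -> R) (s : R) :=
  gamma * y 0 * decay beta (extend l y) s.

(* Kirchhoff transform: (kirchhoff beta y)' = (1 + beta y) y'. *)
Definition kirchhoff (beta v : R) := v + beta / 2 * v * v.

Lemma kirchhoff_sub beta v z : kirchhoff beta v - kirchhoff beta z = (v - z) * (1 + beta * (v + z) / 2).
Proof. unfold kirchhoff; field. Qed.

Lemma kirchhoff_lt beta v z : 0 <= beta -> 0 <= v -> 0 <= z -> v < z ->
  kirchhoff beta v < kirchhoff beta z.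
Proof.
  intros. apply Rlt_0_minus. rewrite kirchhoff_sub.
  apply Rmult_lt_0_compat; [lra|].
  assert (0 <= beta * (z + v)) by (apply Rmult_le_pos; lra). lra.
Qed.

Lemma kirchhoff_le beta v z : 0 <= beta -> 0 <= v -> 0 <= z -> v <= z ->
  kirchhoff beta v <= kirchhoff beta z.
Proof. intros ? ? ? [h| ->]; [left; apply kirchhoff_lt; auto|lra]. Qed.

Lemma Rabs_le_kirchhoff_sub beta v z : 0 <= beta -> 0 <= v -> 0 <= z ->
  Rabs (v - z) <= Rabs (kirchhoff beta v - kirchhoff beta z).
Proof.
  intros. rewrite kirchhoff_sub, Rabs_mult.
  assert (0 <= beta * (v + z)) by (apply Rmult_le_pos; lra).
  rewrite (Rabs_pos_eq (1 + _)) by lra.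
  pose proof (Rabs_pos (v - z)). nra.
Qed.

Lemma kirchhoff_sub_le beta v z : 0 <= beta -> 0 <= z <= v -> v <= 1 ->
  kirchhoff beta v - kirchhoff beta z <= (1 + beta) * (v - z).
Proof.
  intros. rewrite kirchhoff_sub.
  assert (beta * (v + z) <= beta * 2) by (apply Rmult_le_compat_l; lra).
  rewrite (Rmult_comm (1 + beta)). apply Rmult_le_compat_l; lra.
Qed.

Lemma energy_ineq v w d E k a g B : 0 <= k -> 0 < E <= 1 -> Rabs d <= B * Rabs w -> 0 <= B ->
  0 <= a <= 1 -> 0 < g ->
  2 * v * (- k * v + d * E) + 2 * w * (g * a * v) <= (B + g) * (v * v + w * w).
Proof.
  intros Hk HE Hd HB Ha Hg.
  assert (H1 : v * d * E <= Rabs v * Rabs d).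
  { apply Rle_trans with (Rabs (v * d * E)); [apply Rle_abs|].
    rewrite !Rabs_mult, (Rabs_pos_eq E) by lra.
    pose proof (Rmult_le_pos _ _ (Rabs_pos v) (Rabs_pos d)). nra. }
  assert (H2 : a * w * v <= Rabs v * Rabs w).
  { apply Rle_trans with (Rabs (a * w * v)); [apply Rle_abs|].
    rewrite !Rabs_mult, (Rabs_pos_eq a) by lra.
    pose proof (Rmult_le_pos _ _ (Rabs_pos v) (Rabs_pos w)). nra. }
  assert (H3 : Rabs v * Rabs d <= B * (Rabs v * Rabs w)) by (pose proof (Rabs_pos v); nra).
  assert (H4 : 2 * (Rabs v * Rabs w) <= v * v + w * w).
  { pose proof (Rle_0_sqr (Rabs v - Rabs w)) as H. unfold Rsqr in H.
    assert (Rabs v * Rabs v = v * v) by (rewrite <- Rabs_mult; apply Rabs_pos_eq; nra).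
    assert (Rabs w * Rabs w = w * w) by (rewrite <- Rabs_mult; apply Rabs_pos_eq; nra).
    nra. }
  assert (0 <= k * v * v) by (rewrite Rmult_assoc; apply Rmult_le_pos; nra).
  nra.
Qed.

Section Solutions.

Variables beta gamma : R.
Hypothesis Hbeta : 0 <= beta.
Hypothesis Hgamma : 0 < gamma.

Section OneSolution.

Variables (l : R) (y dy : R -> R).
Hypothesis Hl : 0 < l.
Hypothesis Hsol : solves beta gamma l y dy.

Let Y := extend l y.
Let E := decay beta Y.

Lemma solves_extend_range z : 0 <= Y z <= 1.
Proof. apply (sol_range Hsol), clamp_range. lra. Qed.

Lemma solves_extend_continuous z : continuity_pt Y z.
Proof. apply (extend_continuous y dy); [exact Hl|apply (sol_deriv Hsol)]. Qed.

Lemma solves_init_range : 0 <= y 0 <= 1.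
Proof. apply (sol_range Hsol). lra. Qed.

Lemma solves_deriv_interior : exists C, forall c, 0 < c < l -> dy c = C * E c / (1 + beta * Y c).
Proof.
  set (p := fun s => (1 + beta * y s) * dy s).
  assert (HE : forall x, 0 < E x) by (intros; apply exp_pos).
  assert (Hr : forall c, 0 < c < l -> derivable_pt_lim (fun s => p s / E s) c 0).
  { intros c Hc.
    assert (Hpc : derivable_pt_lim p c (- (2 * c * dy c)))
      by (apply is_derive_Reals, (sol_ode Hsol); auto).
    pose proof (derivable_pt_lim_div p E c _ _ Hpc
      (decay_derivable beta Y Hbeta solves_extend_continuous solves_extend_range c)
      (Rgt_not_eq _ _ (HE c))) as H.
    replace 0 with ((- (2 * c * dy c) * E c - - kern beta Y c * E c * p c) / (E c)²);
      [exact H|].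
    unfold kern, p, Y. rewrite extend_id by lra.
    pose proof (sol_range Hsol c ltac:(lra)). pose proof (HE c).
    field. split; [nra|unfold Rsqr; nra]. }
  exists (p (l / 2) / E (l / 2)). intros c Hc.
  rewrite <- (derivable_pt_lim_0_const _ 0 l Hr c (l / 2) Hc ltac:(lra)).
  unfold p, Y. rewrite extend_id by lra.
  pose proof (sol_range Hsol c ltac:(lra)). pose proof (HE c).
  field. split; [lra|nra].
Qed.

Lemma solves_deriv_eq eta : 0 <= eta <= l -> dy eta = flux beta gamma l y eta / (1 + beta * Y eta).
Proof.
  destruct solves_deriv_interior as [C HC].
  set (F := fun s => C * E s / (1 + beta * Y s)).
  assert (HFc : forall x, continuity_pt F x).
  { intros x. unfold F.
    apply (continuity_pt_div (fun s => C * E s) (fun s => 1 + beta * Y s)).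
    - apply continuity_pt_scal, decay_continuous; auto.
      + apply solves_extend_continuous.
      + apply solves_extend_range.
    - apply (continuity_pt_plus (fun _ => 1) (fun s => beta * Y s));
        [apply continuity_pt_const; intros a b; auto|].
      apply continuity_pt_scal, solves_extend_continuous.
    - pose proof (solves_extend_range x). nra. }
  assert (HYF : forall c, 0 < c < l -> derivable_pt_lim Y c (F c)).
  { intros c Hc. unfold F. rewrite <- HC by auto. apply extend_derivable; auto. apply Hsol. }
  assert (Hend : forall x, x = 0 \/ x = l -> dy x = F x).
  { intros x Hx. apply (deriv_on_closed_endpoint y dy l); auto. apply Hsol. }
  assert (HC0 : C = gamma * y 0).
  { pose proof (Hend 0 (or_introl eq_refl)) as H0. unfold F, E in H0.
    rewrite decay_0 in H0 by auto. unfold Y in H0. rewrite extend_id in H0 by lra.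
    pose proof (sol_robin Hsol). pose proof solves_init_range.
    assert (Hpos : 0 < 1 + beta * y 0) by nra.
    assert (HH : dy 0 * (1 + beta * y 0) = C) by (rewrite H0; field; lra). nra. }
  intros Heta. unfold flux. fold Y E. rewrite <- HC0.
  destruct (Req_dec eta 0) as [->|h0]; [apply Hend; auto|].
  destruct (Req_dec eta l) as [->|h1]; [apply Hend; auto|].
  apply HC. lra.
Qed.

Lemma extend_derivable_flux eta : 0 < eta < l ->
  derivable_pt_lim Y eta (flux beta gamma l y eta / (1 + beta * Y eta)).
Proof.
  intros He. rewrite <- solves_deriv_eq by lra.
  apply extend_derivable; auto. apply Hsol.
Qed.

Lemma kirchhoff_extend_derivable eta : 0 < eta < l ->
  derivable_pt_lim (fun s => kirchhoff beta (Y s)) eta (flux beta gamma l y eta).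
Proof.
  intros He. pose proof (extend_derivable_flux eta He) as HY.
  pose proof (solves_extend_range eta) as Hr.
  unfold kirchhoff.
  replace (flux beta gamma l y eta) with
    (flux beta gamma l y eta / (1 + beta * Y eta) +
     ((0 * Y eta + beta / 2 * (flux beta gamma l y eta / (1 + beta * Y eta))) * Y eta +
      beta / 2 * Y eta * (flux beta gamma l y eta / (1 + beta * Y eta))))
    by (field; nra).
  apply (derivable_pt_lim_plus Y (fun s => beta / 2 * Y s * Y s)); [exact HY|].
  apply (derivable_pt_lim_mult (fun s => beta / 2 * Y s) Y); [|exact HY].
  apply (derivable_pt_lim_mult (fun _ => beta / 2) Y); [apply derivable_pt_lim_const|exact HY].
Qed.

Lemma kirchhoff_extend_continuous x : continuity_pt (fun s => kirchhoff beta (Y s)) x.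
Proof.
  unfold kirchhoff. pose proof (solves_extend_continuous x) as Hc.
  apply continuity_pt_plus; [exact Hc|].
  apply continuity_pt_mult; [|exact Hc].
  apply continuity_pt_scal, Hc.
Qed.

Lemma flux_derivable x :
  derivable_pt_lim (flux beta gamma l y) x (- kern beta Y x * flux beta gamma l y x).
Proof.
  unfold flux. fold Y.
  replace (- kern beta Y x * (gamma * y 0 * decay beta Y x))
    with (gamma * y 0 * (- kern beta Y x * decay beta Y x)) by ring.
  apply derivable_pt_lim_scal, decay_derivable; auto.
  - apply solves_extend_continuous.
  - apply solves_extend_range.
Qed.

Lemma flux_bounds x : 0 <= x -> 0 <= flux beta gamma l y x <= gamma.
Proof.
  intros Hx.
  destruct (decay_bounds beta Y Hbeta solves_extend_continuous solves_extend_range x Hx) as [[HE1 HE2] _].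
  pose proof solves_init_range.
  unfold flux. fold Y. split.
  - apply Rmult_le_pos; [apply Rmult_le_pos|]; lra.
  - apply Rle_trans with (gamma * 1 * 1); [|lra].
    apply Rmult_le_compat; try lra; [apply Rmult_le_pos; lra|].
    apply Rmult_le_compat_l; lra.
Qed.

Lemma flux_decrease x1 x2 L : 0 <= x1 <= x2 -> x2 <= L ->
  0 <= flux beta gamma l y x1 - flux beta gamma l y x2 <= 2 * L * gamma * (x2 - x1).
Proof.
  intros Hx HL.
  destruct (Req_dec x1 x2) as [<-|Hne]; [lra|].
  destruct (MVT_derivable_pt_lim (flux beta gamma l y)
              (fun s => - kern beta Y s * flux beta gamma l y s) x1 x2 ltac:(lra))
    as [c [Hc Heq]].
  - intros; apply flux_derivable.
  - intros; apply derivable_continuous_pt; eexists; apply flux_derivable.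
  - pose proof (kern_bounds beta Y Hbeta solves_extend_range c ltac:(lra)).
    pose proof (flux_bounds c ltac:(lra)).
    assert (0 <= kern beta Y c * flux beta gamma l y c <= 2 * L * gamma).
    { split; [apply Rmult_le_pos; lra|apply Rmult_le_compat; lra]. }
    nra.
Qed.

Lemma extend_slope_le c : 0 <= c -> flux beta gamma l y c / (1 + beta * Y c) <= gamma.
Proof.
  intros Hc. pose proof (flux_bounds c Hc). pose proof (solves_extend_range c).
  apply Rle_trans with (flux beta gamma l y c / 1); [|rewrite Rdiv_1_r; lra].
  apply Rmult_le_compat_l; [lra|]. apply Rinv_le_contravar; nra.
Qed.

Lemma solves_sub_le a b : 0 <= a < b -> b <= l -> y b - y a <= gamma * (b - a).
Proof.
  intros Hab Hb.
  destruct (MVT_derivable_pt_lim Y (fun s => flux beta gamma l y s / (1 + beta * Y s)) a b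
              ltac:(lra)) as [c [Hc Heq]].
  - intros c Hc. apply extend_derivable_flux. lra.
  - intros c _. apply solves_extend_continuous.
  - assert (Hy : forall s, 0 <= s <= l -> Y s = y s) by (intros; apply extend_id; lra).
    rewrite (Hy a), (Hy b) in Heq by lra.
    pose proof (extend_slope_le c ltac:(lra)). rewrite Heq. nra.
Qed.

Lemma flux_end_lower : gamma * l <= 1 -> l <= 1 ->
  gamma * (1 - gamma * l) * (1 - l * l) <= flux beta gamma l y l.
Proof.
  intros Hgl Hl1.
  pose proof (solves_sub_le 0 l ltac:(lra) ltac:(lra)) as Hy. rewrite (sol_end Hsol) in Hy.
  destruct (decay_bounds beta Y Hbeta solves_extend_continuous solves_extend_range l
              ltac:(lra)) as [_ HE].
  unfold flux. fold Y.
  apply Rmult_le_compat; try nra.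
Qed.

End OneSolution.

Lemma kern_sub_le Y1 Y2 c m : 0 <= Y1 c <= 1 -> 0 <= Y2 c <= 1 -> 0 < c <= m ->
  Rabs (kern beta Y2 c - kern beta Y1 c) <=
    2 * m * beta * Rabs (kirchhoff beta (Y1 c) - kirchhoff beta (Y2 c)).
Proof.
  intros R1 R2 Hc.
  assert (Hp1 : 1 <= 1 + beta * Y1 c) by nra.
  assert (Hp2 : 1 <= 1 + beta * Y2 c) by nra.
  assert (Hq : 1 <= (1 + beta * Y1 c) * (1 + beta * Y2 c)) by nra.
  assert (Hk : kern beta Y2 c - kern beta Y1 c =
            2 * c * beta * (Y1 c - Y2 c) / ((1 + beta * Y1 c) * (1 + beta * Y2 c)))
    by (unfold kern; field; lra).
  pose proof (Rabs_le_kirchhoff_sub beta (Y1 c) (Y2 c) Hbeta ltac:(lra) ltac:(lra)).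
  assert (HcB : 0 <= 2 * c * beta <= 2 * m * beta) by (split; nra).
  rewrite Hk. unfold Rdiv. rewrite Rabs_mult, Rabs_inv, Rabs_mult.
  rewrite (Rabs_pos_eq (2 * c * beta)), (Rabs_pos_eq (_ * (1 + _))) by lra.
  assert (Hinv : 0 < / ((1 + beta * Y1 c) * (1 + beta * Y2 c)) <= 1).
  { split; [apply Rinv_0_lt_compat; lra|].
    rewrite <- Rinv_1. apply Rinv_le_contravar; lra. }
  pose proof (Rabs_pos (Y1 c - Y2 c)).
  apply Rle_trans with (2 * c * beta * Rabs (Y1 c - Y2 c)).
  - rewrite <- (Rmult_1_r (2 * c * beta * Rabs (Y1 c - Y2 c))) at 2.
    apply Rmult_le_compat_l; [apply Rmult_le_pos|]; lra.
  - apply Rmult_le_compat; lra.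
Qed.

Section Comparison.

Variables (l1 l2 : R) (y1 dy1 y2 dy2 : R -> R).
Hypothesis Hl1 : 0 < l1.
Hypothesis Hl2 : 0 < l2.
Hypothesis Hsol1 : solves beta gamma l1 y1 dy1.
Hypothesis Hsol2 : solves beta gamma l2 y2 dy2.

Let Y1 := extend l1 y1.
Let Y2 := extend l2 y2.
Let U1 s := kirchhoff beta (Y1 s).
Let U2 s := kirchhoff beta (Y2 s).
Let P1 := flux beta gamma l1 y1.
Let P2 := flux beta gamma l2 y2.

Lemma flux_sub_ge s : 0 <= s -> (forall z, 0 < z < s -> Y2 z <= Y1 z) ->
  gamma * (y1 0 - y2 0) * decay beta Y2 s <= P1 s - P2 s.
Proof.
  intros Hs Hle.
  assert (HE : decay beta Y2 s <= decay beta Y1 s).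
  { apply decay_le_of_le; auto.
    - apply (solves_extend_continuous _ _ _ Hl1 Hsol1).
    - apply (solves_extend_range _ _ _ Hl1 Hsol1).
    - apply (solves_extend_continuous _ _ _ Hl2 Hsol2).
    - apply (solves_extend_range _ _ _ Hl2 Hsol2). }
  pose proof (solves_init_range _ _ _ Hl1 Hsol1).
  assert (0 <= gamma * y1 0) by (apply Rmult_le_pos; lra).
  unfold P1, P2, flux. fold Y1 Y2.
  replace (gamma * y1 0 * decay beta Y1 s - gamma * y2 0 * decay beta Y2 s)
    with (gamma * (y1 0 - y2 0) * decay beta Y2 s +
          gamma * y1 0 * (decay beta Y1 s - decay beta Y2 s)) by ring.
  pose proof (Rmult_le_pos (gamma * y1 0) (decay beta Y1 s - decay beta Y2 s)). nra.
Qed.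

(* Integrate U1' - U2' = P1 - P2 > 0 over [0, eta]. *)
Lemma extend_lt_step m eta : m <= l1 -> m <= l2 -> y2 0 < y1 0 -> 0 < eta <= m ->
  (forall s, 0 <= s < eta -> Y2 s < Y1 s) -> Y2 eta < Y1 eta.
Proof.
  intros Hm1 Hm2 Hy0 Heta Hbelow.
  destruct (MVT_derivable_pt_lim (fun s => U1 s - U2 s) (fun s => P1 s - P2 s) 0 eta
              ltac:(lra)) as [c [Hc Heq]].
  - intros c Hc. apply derivable_pt_lim_minus;
      [apply (kirchhoff_extend_derivable _ _ _ Hl1 Hsol1)|
       apply (kirchhoff_extend_derivable _ _ _ Hl2 Hsol2)]; lra.
  - intros c _. apply continuity_pt_minus;
      [apply (kirchhoff_extend_continuous _ _ _ Hl1 Hsol1)|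
       apply (kirchhoff_extend_continuous _ _ _ Hl2 Hsol2)].
  - assert (HP : 0 < P1 c - P2 c).
    { eapply Rlt_le_trans; [|apply flux_sub_ge; [lra|]].
      - destruct (decay_bounds beta Y2 Hbeta (solves_extend_continuous _ _ _ Hl2 Hsol2)
                    (solves_extend_range _ _ _ Hl2 Hsol2) c ltac:(lra)) as [[HE _] _].
        apply Rmult_lt_0_compat; [apply Rmult_lt_0_compat|]; lra.
      - intros z Hz. left. apply Hbelow. lra. }
    assert (HU0 : U2 0 < U1 0).
    { unfold U1, U2, Y1, Y2. rewrite !extend_id by lra.
      pose proof (solves_init_range _ _ _ Hl2 Hsol2).
      apply kirchhoff_lt; lra. }
    pose proof (solves_extend_range _ _ _ Hl1 Hsol1 eta) as R1. fold Y1 in R1.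
    pose proof (solves_extend_range _ _ _ Hl2 Hsol2 eta) as R2. fold Y2 in R2.
    destruct (Rlt_or_le (Y2 eta) (Y1 eta)) as [h|h]; [exact h|].
    pose proof (kirchhoff_le beta (Y1 eta) (Y2 eta) Hbeta ltac:(lra) ltac:(lra) h).
    unfold U1, U2 in *. nra.
Qed.

Lemma extend_lt_of_init_lt m : m <= l1 -> m <= l2 -> y2 0 < y1 0 ->
  forall eta, 0 <= eta <= m -> Y2 eta < Y1 eta.
Proof.
  intros Hm1 Hm2 Hy0 eta0 Heta0.
  assert (Hm : 0 <= m) by lra. revert eta0 Heta0.
  apply real_induction; [exact Hm| |].
  - intros eta He Hbelow. destruct (Req_dec eta 0) as [->|Hne].
    + unfold Y1, Y2. rewrite !extend_id by lra. exact Hy0.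
    + apply (extend_lt_step m); auto; lra.
  - intros eta _ Hlt. apply continuity_pt_lt_right; auto;
      [apply (solves_extend_continuous _ _ _ Hl2 Hsol2)|
       apply (solves_extend_continuous _ _ _ Hl1 Hsol1)].
Qed.

Let E1 := decay beta Y1.
Let E2 := decay beta Y2.

Lemma energy_deriv_le m c : y2 0 = y1 0 -> 0 < c <= m ->
  2 * (E1 c - E2 c) * (- kern beta Y1 c * E1 c - - kern beta Y2 c * E2 c) +
  2 * (U1 c - U2 c) * (P1 c - P2 c) <=
  (2 * m * beta + gamma) * ((E1 c - E2 c) * (E1 c - E2 c) + (U1 c - U2 c) * (U1 c - U2 c)).
Proof.
  intros Hy0 Hc.
  pose proof (solves_extend_range _ _ _ Hl1 Hsol1) as R1.
  pose proof (solves_extend_range _ _ _ Hl2 Hsol2) as R2.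
  pose proof (solves_extend_continuous _ _ _ Hl2 Hsol2) as C2.
  fold Y1 in R1. fold Y2 in C2, R2.
  apply Rle_trans with
    (2 * (E1 c - E2 c) * (- kern beta Y1 c * (E1 c - E2 c) +
                          (kern beta Y2 c - kern beta Y1 c) * E2 c) +
     2 * (U1 c - U2 c) * (gamma * y1 0 * (E1 c - E2 c))).
  - right. unfold P1, P2, flux. fold Y1 Y2 E1 E2. rewrite Hy0. ring.
  - apply energy_ineq.
    + apply (kern_bounds beta Y1 Hbeta R1). lra.
    + apply (decay_bounds beta Y2 Hbeta C2 R2). lra.
    + apply (kern_sub_le Y1 Y2 c m (R1 c) (R2 c)). lra.
    + apply Rmult_le_pos; lra.
    + apply (solves_init_range _ _ _ Hl1 Hsol1).
    + exact Hgamma.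
Qed.

(* Energy method: V = (E1 - E2)^2 + (U1 - U2)^2 vanishes at 0 and V' <= C V. *)
Lemma extend_eq_of_init_eq m : m <= l1 -> m <= l2 -> y2 0 = y1 0 ->
  forall eta, 0 <= eta <= m -> Y2 eta = Y1 eta.
Proof.
  intros Hm1 Hm2 Hy0.
  pose proof (solves_extend_continuous _ _ _ Hl1 Hsol1) as C1.
  pose proof (solves_extend_continuous _ _ _ Hl2 Hsol2) as C2.
  pose proof (solves_extend_range _ _ _ Hl1 Hsol1) as R1.
  pose proof (solves_extend_range _ _ _ Hl2 Hsol2) as R2.
  pose proof (kirchhoff_extend_continuous _ _ _ Hl1 Hsol1) as CU1.
  pose proof (kirchhoff_extend_continuous _ _ _ Hl2 Hsol2) as CU2.
  fold Y1 in C1, R1. fold Y2 in C2, R2.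
  set (e := fun s => E1 s - E2 s). set (u := fun s => U1 s - U2 s).
  assert (Hgron : forall eta, 0 <= eta <= m -> e eta * e eta + u eta * u eta <= 0).
  { apply (gronwall_nonpos (fun s => e s * e s + u s * u s)
             (fun s => 2 * e s * (- kern beta Y1 s * E1 s - - kern beta Y2 s * E2 s) +
                       2 * u s * (P1 s - P2 s)) (2 * m * beta + gamma) m).
    - intros c Hc. apply derivable_pt_lim_sum_sq.
      + apply (derivable_pt_lim_minus E1 E2); apply decay_derivable; auto.
      + apply (derivable_pt_lim_minus U1 U2);
          [apply (kirchhoff_extend_derivable _ _ _ Hl1 Hsol1)|
           apply (kirchhoff_extend_derivable _ _ _ Hl2 Hsol2)]; lra.
    - intros c _. apply continuity_pt_plus; apply continuity_pt_mult;
        apply continuity_pt_minus; auto; apply decay_continuous; auto.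
    - intros c Hc. apply energy_deriv_le; auto. lra.
    - unfold e, u, U1, U2, E1, E2, Y1, Y2. rewrite !decay_0; auto.
      rewrite !extend_id, Hy0 by lra. ring. }
  intros eta Heta. specialize (Hgron eta Heta).
  assert (Hu0 : u eta = 0) by nra.
  pose proof (Rabs_le_kirchhoff_sub beta (Y1 eta) (Y2 eta) Hbeta ltac:(apply R1) ltac:(apply R2)).
  unfold u, U1, U2 in Hu0. rewrite Hu0, Rabs_R0 in H.
  pose proof (Rabs_pos (Y1 eta - Y2 eta)).
  assert (Habs : Rabs (Y1 eta - Y2 eta) = 0) by lra.
  apply Rabs_eq_0 in Habs. lra.
Qed.

Lemma kirchhoff_gap_le t : l1 < l2 -> 0 < t <= l1 ->
  (forall s, 0 <= s <= l1 -> Y2 s <= Y1 s) ->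
  exists xi, l1 - t < xi < l1 /\ (P1 xi - P2 xi) * t <= (1 + beta) * gamma * (l2 - l1).
Proof.
  intros Hl12 Ht Hord.
  pose proof (solves_extend_range _ _ _ Hl1 Hsol1) as R1.
  pose proof (solves_extend_range _ _ _ Hl2 Hsol2) as R2.
  fold Y1 in R1. fold Y2 in R2.
  assert (Hend : 1 - Y2 l1 <= gamma * (l2 - l1)).
  { pose proof (solves_sub_le _ _ _ Hl2 Hsol2 l1 l2 ltac:(lra) ltac:(lra)).
    rewrite (sol_end Hsol2) in H. unfold Y2. rewrite extend_id by lra. exact H. }
  assert (Hgap_end : U1 l1 - U2 l1 <= (1 + beta) * gamma * (l2 - l1)).
  { unfold U1, U2, Y1. rewrite extend_id, (sol_end Hsol1) by lra. fold Y2.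
    pose proof (kirchhoff_sub_le beta 1 (Y2 l1) Hbeta ltac:(specialize (R2 l1); lra) ltac:(lra)).
    nra. }
  assert (Hgap_start : 0 <= U1 (l1 - t) - U2 (l1 - t)).
  { unfold U1, U2. pose proof (R1 (l1 - t)). pose proof (R2 (l1 - t)).
    pose proof (kirchhoff_le beta (Y2 (l1 - t)) (Y1 (l1 - t)) Hbeta ltac:(lra) ltac:(lra)
                  (Hord (l1 - t) ltac:(lra))). lra. }
  destruct (MVT_derivable_pt_lim (fun s => U1 s - U2 s) (fun s => P1 s - P2 s) (l1 - t) l1
              ltac:(lra)) as [xi [Hxi Heq]].
  - intros c Hc. apply derivable_pt_lim_minus;
      [apply (kirchhoff_extend_derivable _ _ _ Hl1 Hsol1)|
       apply (kirchhoff_extend_derivable _ _ _ Hl2 Hsol2)]; lra.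
  - intros c _. apply continuity_pt_minus;
      [apply (kirchhoff_extend_continuous _ _ _ Hl1 Hsol1)|
       apply (kirchhoff_extend_continuous _ _ _ Hl2 Hsol2)].
  - exists xi. split; [exact Hxi|].
    replace (l1 - (l1 - t)) with t in Heq by ring. lra.
Qed.

End Comparison.

Lemma extend_le_of_lt l1 l2 y1 dy1 y2 dy2 : 0 < l1 -> l1 < l2 ->
  solves beta gamma l1 y1 dy1 -> solves beta gamma l2 y2 dy2 ->
  y2 0 <= y1 0 /\ forall s, 0 <= s <= l1 -> extend l2 y2 s <= extend l1 y1 s.
Proof.
  intros Hl1 Hl12 Hs1 Hs2.
  destruct (Rtotal_order (y1 0) (y2 0)) as [h|[h|h]].
  - exfalso.
    pose proof (extend_lt_of_init_lt l2 l1 y2 dy2 y1 dy1 ltac:(lra) Hl1 Hs2 Hs1 l1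
                  ltac:(lra) ltac:(lra) h l1 ltac:(lra)) as H.
    rewrite (extend_id l1 y1 l1), (sol_end Hs1) in H by lra.
    pose proof (solves_extend_range l2 y2 dy2 ltac:(lra) Hs2 l1). lra.
  - split; [lra|]. intros s Hs. right.
    apply (extend_eq_of_init_eq l1 l2 y1 dy1 y2 dy2 Hl1 ltac:(lra) Hs1 Hs2 l1); auto; lra.
  - split; [lra|]. intros s Hs. left.
    apply (extend_lt_of_init_lt l1 l2 y1 dy1 y2 dy2 Hl1 ltac:(lra) Hs1 Hs2 l1); auto; lra.
Qed.

Lemma flux_end_gap l1 l2 y1 dy1 y2 dy2 L t : 0 < l1 -> l1 < l2 -> l2 <= L ->
  solves beta gamma l1 y1 dy1 -> solves beta gamma l2 y2 dy2 -> 0 < t <= l1 ->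
  0 <= flux beta gamma l1 y1 l1 - flux beta gamma l2 y2 l2 <=
    (1 + beta) * gamma * (l2 - l1) / t + 2 * L * gamma * t + 2 * L * gamma * (l2 - l1).
Proof.
  intros Hl1 Hl12 HL Hs1 Hs2 Ht.
  destruct (extend_le_of_lt l1 l2 y1 dy1 y2 dy2 Hl1 Hl12 Hs1 Hs2) as [Hy0 Hord].
  destruct (kirchhoff_gap_le l1 l2 y1 dy1 y2 dy2 Hl1 ltac:(lra) Hs1 Hs2 t Hl12 Ht Hord)
    as [xi [Hxi Hgap]].
  assert (Hord_flux : flux beta gamma l2 y2 l1 <= flux beta gamma l1 y1 l1).
  { pose proof (flux_sub_ge l1 l2 y1 dy1 y2 dy2 Hl1 ltac:(lra) Hs1 Hs2 l1 ltac:(lra)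
                  ltac:(intros z Hz; apply Hord; lra)).
    destruct (decay_bounds beta (extend l2 y2) Hbeta
                (solves_extend_continuous l2 y2 dy2 ltac:(lra) Hs2)
                (solves_extend_range l2 y2 dy2 ltac:(lra) Hs2) l1 ltac:(lra)) as [[HE _] _].
    assert (0 <= gamma * (y1 0 - y2 0) * decay beta (extend l2 y2) l1)
      by (apply Rmult_le_pos; [apply Rmult_le_pos|]; lra).
    lra. }
  pose proof (flux_decrease l2 y2 dy2 ltac:(lra) Hs2 l1 l2 L ltac:(lra) HL).
  pose proof (flux_decrease l2 y2 dy2 ltac:(lra) Hs2 xi l1 L ltac:(lra) ltac:(lra)).
  pose proof (flux_decrease _ _ _ Hl1 Hs1 xi l1 L ltac:(lra) ltac:(lra)).
  assert (Hxi_gap : flux beta gamma l1 y1 xi - flux beta gamma l2 y2 xi <=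
                    (1 + beta) * gamma * (l2 - l1) / t).
  { apply Rmult_le_reg_r with t; [lra|].
    replace ((1 + beta) * gamma * (l2 - l1) / t * t) with ((1 + beta) * gamma * (l2 - l1))
      by (field; lra). exact Hgap. }
  assert (2 * L * gamma * (l1 - xi) <= 2 * L * gamma * t)
    by (apply Rmult_le_compat_l; [apply Rmult_le_pos|]; lra).
  lra.
Qed.

Lemma flux_end_continuous (phi : R -> R -> R) x : 0 < x ->
  (forall lam, 0 < lam -> exists dy, solves beta gamma lam (phi lam) dy) ->
  continuity_pt (fun lam => flux beta gamma lam (phi lam) lam) x.
Proof.
  intros Hx Hsol.
  apply (continuity_pt_of_modulus _ x ((1 + beta) * gamma) (2 * (2 * x) * gamma)); auto;
    try (apply Rmult_lt_0_compat; lra).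
  intros l1 l2 t Hl1 Hl12 Hl2 Ht.
  destruct (Hsol l1 ltac:(lra)) as [dy1 Hs1]. destruct (Hsol l2 ltac:(lra)) as [dy2 Hs2].
  pose proof (flux_end_gap l1 l2 (phi l1) dy1 (phi l2) dy2 (2 * x) t ltac:(lra) Hl12 Hl2
                Hs1 Hs2 Ht).
  rewrite Rabs_pos_eq by lra. lra.
Qed.

End Solutions.

Lemma flux_end_gt_linear beta gamma k : 0 <= beta -> 0 < gamma -> 0 < k ->
  exists a, 0 < a /\ forall y dy, solves beta gamma a y dy -> k * a < flux beta gamma a y a.
Proof.
  intros Hbeta Hgamma Hk.
  set (a := Rmin (1 / 2) (Rmin (1 / (2 * gamma)) (gamma / (4 * k)))).
  pose proof (Rmin_l (1 / 2) (Rmin (1 / (2 * gamma)) (gamma / (4 * k)))) as Ha1.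
  pose proof (Rmin_r (1 / 2) (Rmin (1 / (2 * gamma)) (gamma / (4 * k)))) as Ha2.
  pose proof (Rmin_l (1 / (2 * gamma)) (gamma / (4 * k))) as Ha3.
  pose proof (Rmin_r (1 / (2 * gamma)) (gamma / (4 * k))) as Ha4.
  fold a in Ha1, Ha2.
  assert (Ha : 0 < a).
  { apply Rmin_pos; [lra|]. apply Rmin_pos; apply Rdiv_lt_0_compat; lra. }
  assert (Hga : gamma * a <= 1 / 2).
  { apply Rle_trans with (gamma * (1 / (2 * gamma))); [apply Rmult_le_compat_l; lra|].
    right; field; lra. }
  assert (Hka : k * a <= gamma / 4).
  { apply Rle_trans with (k * (gamma / (4 * k))); [apply Rmult_le_compat_l; lra|].
    right; field; lra. }
  exists a. split; [exact Ha|]. intros y dy Hs.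
  pose proof (flux_end_lower beta gamma Hbeta Hgamma a y dy Ha Hs ltac:(lra) ltac:(lra)).
  assert (gamma * (1 / 2) * (3 / 4) <= gamma * (1 - gamma * a) * (1 - a * a)).
  { apply Rmult_le_compat; try nra. }
  lra.
Qed.

Theorem theorem3p12
  (gamma beta1 beta Ste : R) (phi : R -> R -> R)
  (hgamma : 0 < gamma)
  (hbeta1 : 0 < beta1 /\
     sqrt PI / 2 * gamma * beta1 * sqrt (1 + beta1) * (3 + beta1) = 1)
  (hbeta : 0 <= beta < beta1)
  (hSte : 0 < Ste)
  (hphi : forall lam, 0 < lam ->
     is_sol beta gamma lam (phi lam) /\
     forall h, is_sol beta gamma lam h ->
       forall eta, 0 <= eta <= lam -> h eta = phi lam eta) :
  exists lam, 0 < lam /\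
    exists dphi : R -> R,
      deriv_on_closed (phi lam) dphi 0 lam /\
      dphi lam / lam = 2 / ((1 + beta) * Ste).
Proof.
  destruct hbeta as [Hbeta _].
  assert (Hsol : forall lam, 0 < lam -> exists dy, solves beta gamma lam (phi lam) dy)
    by (intros lam Hlam; apply is_sol_solves, (proj1 (hphi lam Hlam))).
  assert (Hk : 0 < 2 / Ste) by (apply Rdiv_lt_0_compat; lra).
  destruct (flux_end_gt_linear beta gamma (2 / Ste) Hbeta hgamma Hk) as [a [Ha Hka]].
  destruct (Hsol a Ha) as [dya Hsa].
  destruct (exists_eq_linear (fun lam => flux beta gamma lam (phi lam) lam) gamma (2 / Ste) a
              Hk Ha (Hka _ _ Hsa)) as [lam [Hlam Heq]].
  - intros x Hx. apply flux_end_continuous; auto.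
  - intros x Hx. destruct (Hsol x Hx) as [dy Hs].
    apply (flux_bounds beta gamma Hbeta hgamma x (phi x) dy Hx Hs x). lra.
  - exists lam. split; [exact Hlam|].
    destruct (Hsol lam Hlam) as [dy Hs]. exists dy. split; [apply (sol_deriv Hs)|].
    rewrite (solves_deriv_eq beta gamma Hbeta lam (phi lam) dy Hlam Hs lam) by lra.
    rewrite extend_id, (sol_end Hs), Heq by lra.
    field. lra.
Qed.
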